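(* Let $(\mathcal T,\{B_i\})$ be a tree decomposition of a graph $G$, rooted at $r$, with every node at level at most $d$; let $k\ge 1$ and $q\in\mathbb N$, and set $m_j := k^{j/q}\,d/k$ for $j=0,\dots,q-1$, assumed to be positive integers. Define the layer of a node $v$ as $\pi(v):=\max\big(\{-1\}\cup\{j\in\{0,\dots,q-1\}: \ell(v)\equiv 0 \pmod{m_j}\}\big)$. Define new bags $B'_r:=B_r$ and, for $v\neq r$, $$B'_v := B_v\cup\bigcup\Big\{B_w : w\in\mathcal T_{p(v)\leftrightarrow r},\ \pi(w)=\max\{\pi(u): u\in \mathcal T_{p(v)\leftrightarrow w}\}\Big\}.$$ Then $(\mathcal T,\{B'_v\})$ has combinatorial diameter at most $2q+1$.
   Context: Tree decomposition: tree with bags covering vertices and edges of $G$, each vertex's bags forming a connected subtree. $\mathcal T_{x\leftrightarrow y}$ is the set of nodes on the unique $x$–$y$ path in $\mathcal T$ (including $x$ and $y$); $p(v)$ is the parent of $v$; the level $\ell(v)$ is the number of edges on $\mathcal T_{v\leftrightarrow r}$. Combinatorial diameter: for nodes $s,t$ consider the path $\mathcal T_{s\leftrightarrow t}$. A non-endpoint node $v$ of the current path, with its two neighbours on the current path labelled $u,w$ (in some order), is redundant if $B_v\cap B_w\subseteq B_u$; bypassing $v$ deletes $v$ and joins $u,w$. The path has combinatorial length at most $\ell$ if repeatedly bypassing redundant nodes (redundancy evaluated in the current path) yields a path with at most $\ell$ edges. The combinatorial diameter is the minimum $\delta$ such that every path $\mathcal T_{u\leftrightarrow v}$ has combinatorial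 length at most $\delta$ (with respect to the given bags). *)

From mathcomp Require Import all_boot.
From Stdlib Require Import Reals.

Set Implicit Arguments.
Unset Strict Implicit.
Unset Printing Implicit Defensive.

Section TreeDec.

Variable N : finType.

(* A rooted tree on N is given by its root r and a parent map par,
   with par r = r and every node reaching the root by iterating par.
   (The undirected tree has edges {v, par v} for v <> r.) *)
Definition rooted_tree (r : N) (par : N -> N) : Prop :=
  par r = r /\ forall v : N, exists n : nat, iter n par v = r.

Definition level (r : N) (par : N -> N) (v : N) : nat :=
  index r (traject par v #|N|).

Definition up (r : N) (par : N -> N) (v : N) : seq N :=
  traject par v (level r par v).+1.

(* T_{x <-> y}: the node sequence of the unique x--y path in the tree,
   from x to y, both endpoints included *)
Definition tpath (r : N) (par : N -> N) (x y : N) : seq N :=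
  let ux := up r par x in
  let uy := up r par y in
  let i := find (fun z => z \in uy) ux in
  let lca := nth r ux i in
  take i.+1 ux ++ rev (take (index lca uy) uy).

Variable V : finType.

Definition simple_graph (E : rel V) : Prop :=
  symmetric E /\ irreflexive E.

Definition tree_decomposition (E : rel V) (r : N) (par : N -> N)
    (B : N -> {set V}) : Prop :=
  [/\ forall x : V, exists t : N, x \in B t,
      forall x y : V, E x y -> exists t : N, (x \in B t) && (y \in B t)
    & forall (x : V) (t1 t2 : N), x \in B t1 -> x \in B t2 ->
        forall t, t \in tpath r par t1 t2 -> x \in B t].

Definition redundant (B : N -> {set V}) (u v w : N) : bool :=
  (B v :&: B w \subset B u) || (B v :&: B u \subset B w).

Inductive bypass_step (B : N -> {set V}) : seq N -> seq N -> Prop :=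
  | BStep (s1 s2 : seq N) (u v w : N) :
      redundant B u v w ->
      bypass_step B (s1 ++ [:: u, v, w & s2]) (s1 ++ [:: u, w & s2]).

Inductive bypass_star (B : N -> {set V}) : seq N -> seq N -> Prop :=
  | BRefl s : bypass_star B s s
  | BTrans s1 s2 s3 : bypass_step B s1 s2 -> bypass_star B s2 s3 ->
      bypass_star B s1 s3.

(* path s has combinatorial length at most l: some sequence of bypasses
   yields a path with at most l edges (i.e. at most l+1 nodes) *)
Definition comb_length_le (B : N -> {set V}) (s : seq N) (l : nat) : Prop :=
  exists s', bypass_star B s s' /\ size s' <= l.+1.

Definition comb_diam_le (r : N) (par : N -> N) (B : N -> {set V})
    (delta : nat) : Prop :=
  forall u v : N, comb_length_le B (tpath r par u v) delta.

(* layer, shifted by one: layer1 v = pi(v) + 1, so that the value -1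
   of the paper is represented by 0 and j by j.+1 *)
Definition layer1 (r : N) (par : N -> N) (q : nat) (m : nat -> nat)
    (v : N) : nat :=
  \max_(j < q | level r par v %% m j == 0) j.+1.

Definition new_bags (r : N) (par : N -> N) (q : nat) (m : nat -> nat)
    (B : N -> {set V}) (v : N) : {set V} :=
  if v == r then B r
  else B v :|: \bigcup_(w <- tpath r par (par v) r |
                 layer1 r par q m w ==
                   \max_(u <- tpath r par (par v) w) layer1 r par q m u)
               B w.

End TreeDec.

(* Call b a record ancestor of a node a <> r if b lies on the path from p(a)
   to the root and no node of the path from p(a) to b has a larger layer than
   b; the new bag B'_a contains B_b for every record ancestor b of a.  If b is
   a record ancestor of a, c one of b and pi(b) <= pi(c), then c is a record
   ancestor of a, and the connectivity of the decomposition gives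
   B'_b \cap B'_c \subseteq B'_a, so b can be bypassed.  Bypassing greedily,
   each half of T_{s<->t}, from an endpoint up to the meeting node c, becomes a
   chain of record ancestors whose layers strictly decrease towards c; as
   there are q + 1 layer values, both halves have at most q edges unless
   pi(c) = -1.  In that case B'_c lies in the new bags of its two neighbours
   and c is bypassed as well, leaving at most 2q + 1 edges. *)

From Pilot Require Import Defs.
From mathcomp Require Import all_boot zify.

Set Implicit Arguments.
Unset Strict Implicit.
Unset Printing Implicit Defensive.

Lemma belast_take (T : Type) (x : T) s k :
  k <= size s -> belast x (take k s) = take k (x :: s).
Proof. by elim: s x k => [|y s IH] x [|k] //= k_le; rewrite IH. Qed.

Lemma last_take (T : Type) (x : T) s i :
  i <= size s -> last x (take i s) = nth x (x :: s) i.
Proof.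
by elim: s x i => [|y s IH] x [|i] //= i_le; rewrite IH //; apply: set_nth_default.
Qed.

Lemma rev_glue (T : Type) (s t : T) Ls Lt : last s Ls = last t Lt ->
  rev ((s :: Ls) ++ rev (belast t Lt)) = (t :: Lt) ++ rev (belast s Ls).
Proof.
by move=> same_last; rewrite rev_cat revK (lastI s) rev_rcons same_last -cat_rcons -lastI.
Qed.

Section RootedTree.
Variables (N : finType) (r : N) (par : N -> N).
Hypothesis tree : rooted_tree r par.
Local Notation lev := (level r par).
Local Notation up := (up r par).

Lemma levelE v : lev v = findex par v r.
Proof.
have vr : fconnect par v r by case: tree => _ /(_ v) [n <-]; exact: fconnect_iter.
rewrite /level -(subnKC (max_card (fconnect par v))) trajectD index_cat.
by rewrite -fconnect_orbit vr.
Qed.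

Lemma iter_level v : iter (lev v) par v = r.
Proof.
rewrite levelE iter_findex //.
by case: tree => _ /(_ v) [n <-]; exact: fconnect_iter.
Qed.

Lemma level_leq_iter n v : iter n par v = r -> lev v <= n.
Proof.
move=> vr; rewrite levelE; case: (ltnP n (order par v)) => [lt_n|le_n].
  by rewrite -vr findex_iter.
by apply: leq_trans le_n; apply/ltnW/findex_max; rewrite -vr fconnect_iter.
Qed.

Lemma level_root : lev r = 0.
Proof. by apply/eqP; rewrite -leqn0; apply: level_leq_iter. Qed.

Lemma level_par v : v != r -> lev v = (lev (par v)).+1.
Proof.
move=> vNr; have lev_gt0 : 0 < lev v.
  by rewrite lt0n; apply: contraNneq vNr => lev0; rewrite -(iter_level v) lev0.
apply/eqP; rewrite eqn_leq level_leq_iter ?iterSr ?iter_level //=.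
by rewrite -(prednK lev_gt0) ltnS level_leq_iter // -iterSr prednK ?iter_level.
Qed.

Lemma level_ind (P : N -> Prop) :
  P r -> (forall v, v != r -> P (par v) -> P v) -> forall v, P v.
Proof.
move=> Pr IH v; elim: (lev v).+1 {-2}v (ltnSn (lev v)) => // n IHn w.
case: (eqVneq w r) => [-> //|wNr]; rewrite (level_par wNr) ltnS => lt_w.
exact/IH/IHn.
Qed.

Lemma up_root : up r = [:: r].
Proof. by rewrite /up level_root. Qed.

Lemma up_par v : v != r -> up v = v :: up (par v).
Proof. by move=> vNr; rewrite /up (level_par vNr). Qed.

Lemma up_head v : up v = v :: behead (up v).
Proof. by []. Qed.

Lemma mem_up_par v y : v != r -> (y \in up v) = (y == v) || (y \in up (par v)).
Proof. by move=> vNr; rewrite (up_par vNr) in_cons. Qed.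

Local Opaque Defs.up.

Lemma mem_up_self v : v \in up v.
Proof. by rewrite up_head mem_head. Qed.

Lemma root_in_up v : r \in up v.
Proof.
elim/level_ind: v => [|v vNr IH]; first by rewrite up_root mem_head.
by rewrite mem_up_par // IH orbT.
Qed.

Lemma level_up x y : y \in up x -> lev y <= lev x.
Proof.
elim/level_ind: x => [|x xNr IH]; first by rewrite up_root inE => /eqP ->.
rewrite mem_up_par // => /orP [/eqP -> //|/IH].
by rewrite (level_par xNr) => /leq_trans; apply.
Qed.

Lemma level_up_par x y : x != r -> y \in up (par x) -> lev y < lev x.
Proof. by move=> xNr /level_up; rewrite (level_par xNr). Qed.

Lemma up_par_neq x y : x != r -> y \in up (par x) -> x != y.
Proof. by move=> xNr /(level_up_par xNr); apply: contraTneq => <-; rewrite ltnn. Qed.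

Lemma up_trans x y z : y \in up x -> z \in up y -> z \in up x.
Proof.
elim/level_ind: x => [|x xNr IH].
  by rewrite up_root inE => /eqP ->; rewrite up_root.
rewrite (mem_up_par _ xNr) => /orP [/eqP -> //|y_x z_y].
by rewrite mem_up_par // IH ?orbT.
Qed.

Lemma up_par_sub x y : x != r -> y \in up (par x) -> y \in up x.
Proof. by move=> xNr y_x; rewrite mem_up_par // y_x orbT. Qed.

Lemma up_total b z c : z \in up b -> c \in up b ->
  c \in up z \/ (c != r /\ z \in up (par c)).
Proof.
elim/level_ind: b => [|b bNr IH].
  by rewrite up_root !inE => /eqP -> /eqP ->; left; apply: mem_up_self.
rewrite !(mem_up_par _ bNr) => /orP [/eqP ->|z_b] /orP [/eqP ->|c_b].
- by left; apply: mem_up_self.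
- by left; apply: up_par_sub.
- by right.
- exact: IH.
Qed.

Lemma find_up y z : z \in up y -> find (fun w => w \in up z) (up y) = index z (up y).
Proof.
elim/level_ind: y => [|y yNr IH].
  by rewrite up_root inE => /eqP ->; rewrite /= mem_up_self eqxx.
rewrite (mem_up_par _ yNr) => /orP [/eqP ->|z_y]; rewrite (up_par yNr) /=.
  by rewrite inE eqxx.
have -> : (y \in up z) = false.
  by apply/negP => /level_up; rewrite leqNgt level_up_par.
by rewrite (negbTE (up_par_neq yNr z_y)) IH.
Qed.

Lemma tpath_up y z : z \in up y -> tpath r par y z = take (index z (up y)).+1 (up y).
Proof.
move=> z_y; rewrite /tpath find_up // nth_index // (up_head z) /= eqxx.
exact: cats0.
Qed.

Lemma tpath_root x : tpath r par x r = up x.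
Proof.
rewrite tpath_up ?root_in_up //; elim/level_ind: x => [|x xNr IH].
  by rewrite up_root /= ?eqxx.
by rewrite up_par //= (negbTE xNr) IH.
Qed.

Lemma tpath_self x : tpath r par x x = [:: x].
Proof. by rewrite tpath_up ?mem_up_self // (up_head x) /= eqxx take0. Qed.

Lemma mem_tpath_up z1 c z2 : c \in up z1 -> z2 \in up c -> c \in tpath r par z1 z2.
Proof.
move=> c_z1 z2_c; rewrite tpath_up ?(up_trans c_z1) //.
elim/level_ind: z1 c_z1 => [|z1 z1Nr IH].
  by rewrite up_root inE => /eqP ->; rewrite /= ?inE ?eqxx.
rewrite (mem_up_par _ z1Nr) => /orP [/eqP ->|c_z1]; rewrite (up_par z1Nr) /=.
  by rewrite mem_head.
rewrite (negbTE (up_par_neq z1Nr (up_trans c_z1 z2_c))) /=.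
by rewrite inE IH ?orbT.
Qed.

Lemma tpath_up_cat y b z : b \in up y -> b != r -> z \in up (par b) ->
  tpath r par y z = tpath r par y b ++ tpath r par (par b) z.
Proof.
move=> b_y bNr z_b; have z_y := up_trans b_y (up_par_sub bNr z_b).
rewrite !tpath_up // {z_y}; elim/level_ind: y b_y => [|y yNr IH].
  by rewrite up_root inE => /eqP b_r; rewrite b_r eqxx in bNr.
rewrite (mem_up_par _ yNr) (up_par yNr) /= => /orP [/eqP b_y|b_y].
  by subst b; rewrite eqxx (negbTE (up_par_neq yNr z_b)).
have z_py := up_trans b_y (up_par_sub bNr z_b).
by rewrite (negbTE (up_par_neq yNr b_y)) (negbTE (up_par_neq yNr z_py)) IH.
Qed.

Lemma up_path (e : rel N) x :
  (forall a, a != r -> e a (par a)) -> path e x (behead (up x)).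
Proof.
move=> e_par; elim/level_ind: x => [|x xNr IH]; first by rewrite up_root.
by rewrite (up_par xNr) /= {1}up_head /= e_par // -up_head.
Qed.

Lemma tpath_split (e : rel N) s t : (forall a, a != r -> e a (par a)) ->
  exists Ls Lt, [/\ tpath r par s t = (s :: Ls) ++ rev (belast t Lt),
    path e s Ls, path e t Lt & last s Ls = last t Lt].
Proof.
move=> e_par.
set i := find (fun w => w \in up t) (up s); set c := nth r (up s) i.
have has_t : has (fun w => w \in up t) (up s) by apply/hasP; exists r; rewrite root_in_up.
have i_lt : i < size (up s) by rewrite -has_find.
have c_t : c \in up t by apply: nth_find.
set k := index c (up t); have k_lt : k < size (up t) by rewrite index_mem.
have -> : tpath r par s t = take i.+1 (up s) ++ rev (take k (up t)) by [].
exists (take i (behead (up s))), (take k (behead (up t))).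
have size_s : i <= size (behead (up s)) by rewrite size_behead -ltnS prednK.
have size_t : k <= size (behead (up t)) by rewrite size_behead -ltnS prednK.
split; rewrite ?take_path ?up_path // ?belast_take // -?up_head //.
by rewrite !last_take // -!up_head (set_nth_default r) // nth_index.
Qed.
End RootedTree.

Section Bypass.
Variables (N V : finType) (B : N -> {set V}).

Lemma bypass_star_trans s1 s2 s3 :
  bypass_star B s1 s2 -> bypass_star B s2 s3 -> bypass_star B s1 s3.
Proof. by elim=> // x1 x2 x3 step12 _ IH /IH; apply: BTrans step12. Qed.

Lemma bypass_star1 s1 s2 : bypass_step B s1 s2 -> bypass_star B s1 s2.
Proof. by move/BTrans; apply; apply: BRefl. Qed.

Lemma bypass_star_cat p t s s' :
  bypass_star B s s' -> bypass_star B (p ++ s ++ t) (p ++ s' ++ t).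
Proof.
elim=> [s0|s1 s2 s3 [s4 s5 u v w red_v] _ IH]; first exact: BRefl.
have reassoc x : p ++ (s4 ++ x) ++ t = (p ++ s4) ++ x ++ t by rewrite !catA.
by apply: BTrans IH; rewrite !reassoc; apply: BStep.
Qed.

Lemma bypass_star_rev s s' : bypass_star B s s' -> bypass_star B (rev s) (rev s').
Proof.
elim=> [s0|s1 s2 s3 [s4 s5 u v w red_v] _ IH]; first exact: BRefl.
apply: BTrans IH; rewrite !rev_cat !rev_cons -!cats1 -!catA /=.
by apply: BStep; rewrite /redundant orbC.
Qed.

Lemma comb_length_le_size s l : size s <= l.+1 -> comb_length_le B s l.
Proof. by exists s; split=> //; apply: BRefl. Qed.

Lemma comb_length_le_bypass s s' l :
  bypass_star B s s' -> comb_length_le B s' l -> comb_length_le B s l.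
Proof.
move=> ss' [s'' [s's'' size_s'']]; exists s''; split=> //.
exact: bypass_star_trans s's''.
Qed.

End Bypass.

Section RecordChains.
Variables (N V : finType) (B : N -> {set V}) (P : rel N) (lay : N -> nat) (q : nat).
Hypothesis lay_le : forall v, lay v <= q.
Hypothesis P_trans : forall a b c, P a b -> P b c -> lay b <= lay c -> P a c.
Hypothesis P_redundant : forall a b c, P a b -> P b c -> P a c -> B b :&: B c \subset B a.
Hypothesis P_layer0 : forall a c, P a c -> lay c = 0 -> B c \subset B a.

Lemma bypass_decreasing_chain a l : path P a l -> exists l',
  [/\ bypass_star B (a :: l) (a :: l'), path P a l', last a l' = last a l
    & sorted (relpre lay gtn) l'].
Proof.
elim: l a => [|b l IH] a /=; first by exists [::]; split=> //; apply: BRefl.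
case/andP => Pab /IH [l' [red_bl path_bl' last_bl' sorted_l']].
have red_abl : bypass_star B (a :: b :: l) (a :: b :: l').
  by have := bypass_star_cat [:: a] [::] red_bl; rewrite !cats0.
case: l' path_bl' last_bl' sorted_l' red_abl {red_bl} => [|c l'] /=.
  by exists [:: b]; split=> //=; rewrite Pab.
case/andP => Pbc path_cl' last_bl' sorted_l' red_abl.
case: (ltnP (lay c) (lay b)) => [lt_cb|le_bc].
  by exists [:: b, c & l']; split=> //=; rewrite ?Pab ?Pbc // lt_cb.
have Pac := P_trans Pab Pbc le_bc.
exists (c :: l'); split=> //=; last by rewrite Pac.
apply: (bypass_star_trans red_abl); apply: bypass_star1.
by apply: (@BStep _ _ _ [::]); rewrite /redundant P_redundant.
Qed.

Lemma decreasing_path_size a l :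
  path (relpre lay gtn) a l -> size l + lay (last a l) <= lay a.
Proof. by elim: l a => [|b l IH] a /=; [lia | case/andP => /= lt_ba /IH; lia]. Qed.

Lemma decreasing_chain_size x l :
  sorted (relpre lay gtn) l -> size l + lay (last x l) <= q.+1.
Proof.
case: l => [|a l] /=; first by have := lay_le x; lia.
by move/decreasing_path_size; have := lay_le a; lia.
Qed.

Lemma bypass_peak s A t C c : P (last s A) c -> lay c = 0 ->
  bypass_star B ((s :: rcons A c) ++ rev (belast t (rcons C c)))
                ((s :: A) ++ rev (t :: C)).
Proof.
move=> Puc lay_c; rewrite belast_rcons -rcons_cons (lastI s A) (lastI t C) !rev_rcons.
rewrite -!cats1 -!catA /=; apply/bypass_star1/BStep.
by rewrite /redundant (subset_trans (subsetIl _ _)) ?P_layer0.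
Qed.

Lemma comb_length_two_chains s t Ls Lt :
  path P s Ls -> path P t Lt -> last s Ls = last t Lt ->
  comb_length_le B ((s :: Ls) ++ rev (belast t Lt)) (2 * q + 1).
Proof.
move=> /bypass_decreasing_chain [Ls' [red_s path_s last_s sorted_s]].
move=> /bypass_decreasing_chain [Lt' [red_t path_t last_t sorted_t]] same_last.
apply: (@comb_length_le_bypass _ _ _ _ ((s :: Ls') ++ rev (belast t Lt'))).
  apply: (bypass_star_trans (bypass_star_cat [::] _ red_s)).
  rewrite -[X in bypass_star _ X]revK -[X in bypass_star _ _ X]revK.
  have last_Lt : last s Ls' = last t Lt by rewrite last_s.
  have last_Lt' : last s Ls' = last t Lt' by rewrite last_s last_t.
  rewrite (rev_glue last_Lt) (rev_glue last_Lt').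
  by apply: bypass_star_rev; apply: (bypass_star_cat [::] _ red_t).
rewrite -same_last in last_t; set c := last s Ls in last_s last_t.
have := decreasing_chain_size s sorted_s; have := decreasing_chain_size t sorted_t.
rewrite last_s last_t => size_t size_s.
have size_st : size ((s :: Ls') ++ rev (belast t Lt')) = (size Ls' + size Lt').+1.
  by rewrite size_cat size_rev size_belast.
case: (posnP (lay c)) => [lay_c|]; last by move=> lay_c; apply: comb_length_le_size; lia.
case: (lastP Ls') path_s last_s size_s size_st => [|A c1].
  by move=> *; apply: comb_length_le_size; simpl in *; lia.
case: (lastP Lt') path_t last_t size_t => [|C c2].
  by move=> *; apply: comb_length_le_size; simpl in *; lia.
rewrite !last_rcons => _ last_t size_t path_s last_s size_s _; subst c1 c2.
move: path_s; rewrite rcons_path => /andP [_ Puc].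
apply: comb_length_le_bypass (bypass_peak t C Puc lay_c) _.
apply: comb_length_le_size.
by rewrite size_cat size_rev /= !size_rcons in size_s size_t *; lia.
Qed.
End RecordChains.

Section RecordAncestors.
Variables (N V : finType) (r : N) (par : N -> N) (B : N -> {set V}).
Variables (q : nat) (m : nat -> nat).
Hypothesis tree : rooted_tree r par.
Hypothesis B_connected : forall (x : V) (t1 t2 : N), x \in B t1 -> x \in B t2 ->
  forall t, t \in tpath r par t1 t2 -> x \in B t.

Local Notation up := (up r par).
Local Notation lay := (layer1 r par q m).
Local Notation B' := (new_bags r par q m B).

Definition max_layer x y := \max_(u <- tpath r par x y) lay u.

Definition record_anc a b := [&& a != r, b \in up (par a) & lay b == max_layer (par a) b].

Lemma layer1_le v : lay v <= q.
Proof. by apply/bigmax_leqP => j _; apply: ltn_ord. Qed.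

Lemma max_layer_self x : max_layer x x = lay x.
Proof. by rewrite /max_layer (tpath_self tree) big_seq1. Qed.

Lemma max_layer_cat y b z : b \in up y -> b != r -> z \in up (par b) ->
  max_layer y z = maxn (max_layer y b) (max_layer (par b) z).
Proof.
by move=> b_y bNr z_b; rewrite /max_layer (tpath_up_cat tree b_y bNr z_b) big_cat.
Qed.

Lemma record_anc_par a : a != r -> record_anc a (par a).
Proof. by move=> aNr; rewrite /record_anc aNr mem_up_self max_layer_self eqxx. Qed.

Lemma record_anc_trans a b c :
  record_anc a b -> record_anc b c -> lay b <= lay c -> record_anc a c.
Proof.
case/and3P => aNr b_a /eqP lay_b /and3P [bNr c_b /eqP lay_c] le_bc.
rewrite /record_anc aNr (up_trans tree b_a (up_par_sub tree bNr c_b)).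
by rewrite (max_layer_cat b_a bNr c_b) -lay_b -lay_c (maxn_idPr le_bc) eqxx.
Qed.

Lemma new_bags_root : B' r = B r.
Proof. by rewrite /new_bags eqxx. Qed.

Lemma new_bagsE a : a != r -> B' a = B a :|: \bigcup_(w | record_anc a w) B w.
Proof.
move=> aNr; rewrite /new_bags (negbTE aNr) (tpath_root tree) -big_filter bigcup_seq.
by congr (_ :|: _); apply: eq_bigl => w; rewrite mem_filter /record_anc aNr andbC.
Qed.

Lemma sub_new_bags a c : record_anc a c -> B c \subset B' a.
Proof.
move=> rec_ac; have /andP [aNr _] := rec_ac.
by rewrite new_bagsE // (subset_trans _ (subsetUr _ _)) // (bigcup_sup _ rec_ac).
Qed.

Lemma layer_le_record_anc a b c :
  record_anc a c -> b \in up (par a) -> c \in up b -> lay b <= lay c.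
Proof.
by case/and3P => _ _ /eqP -> b_a c_b; apply: leq_bigmax_seq; rewrite // mem_tpath_up.
Qed.

Lemma mem_new_bags c x : x \in B' c -> exists2 z, z \in up c & x \in B z.
Proof.
have [-> | cNr] := eqVneq c r.
  by rewrite new_bags_root; exists r; rewrite ?mem_up_self.
rewrite new_bagsE // => /setUP [x_c | /bigcupP [z /and3P [_ z_c _] x_z]].
  by exists c; rewrite ?mem_up_self.
by exists z; first exact: up_par_sub z_c.
Qed.

Lemma new_bags_desc_mem c z x : c \in up z -> x \in B z -> x \in B' c -> x \in B c.
Proof.
move=> c_z x_z /mem_new_bags [z' z'_c x_z']; apply: B_connected x_z x_z' _ _.
exact: mem_tpath_up.
Qed.

Lemma record_anc_redundant a b c :
  record_anc a b -> record_anc b c -> record_anc a c -> B' b :&: B' c \subset B' a.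
Proof.
move=> rec_ab rec_bc rec_ac; apply/subsetP => x /setIP [x_b x_c].
have [bNr c_b _] := and3P rec_bc; have c_b' := up_par_sub tree bNr c_b.
move: x_b; rewrite new_bagsE // => /setUP [x_b | /bigcupP [z rec_bz x_z]].
  exact/(subsetP (sub_new_bags rec_ac))/(new_bags_desc_mem c_b' x_b x_c).
have [_ z_b _] := and3P rec_bz; have [_ b_a _] := and3P rec_ab.
case: (up_total tree (up_par_sub tree bNr z_b) c_b') => [c_z | [cNr z_c]].
  exact/(subsetP (sub_new_bags rec_ac))/(new_bags_desc_mem c_z x_z x_c).
apply: (subsetP (sub_new_bags (record_anc_trans rec_ab rec_bz _))) x_z.
apply: (leq_trans (layer_le_record_anc rec_ac b_a c_b')).
exact: layer_le_record_anc rec_bz c_b (up_par_sub tree cNr z_c).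
Qed.

Lemma record_anc_layer0 a c : record_anc a c -> lay c = 0 -> B' c \subset B' a.
Proof.
move=> rec_ac lay_c; have [c_r | cNr] := eqVneq c r.
  by move: rec_ac; rewrite c_r new_bags_root; apply: sub_new_bags.
rewrite new_bagsE // subUset sub_new_bags //=; apply/bigcupsP => z rec_cz.
by apply/sub_new_bags/(record_anc_trans rec_ac rec_cz); rewrite lay_c.
Qed.
End RecordAncestors.

From Stdlib Require Import Reals.

Theorem lemma4p5 (V N : finType) (E : rel V) (r : N) (par : N -> N)
    (B : N -> {set V}) (d : nat) (k : R) (q : nat) (m : nat -> nat) :
  simple_graph E ->
  rooted_tree r par ->
  tree_decomposition E r par B ->
  (forall v : N, level r par v <= d) ->
  (1 <= k)%R ->
  (forall j : nat, j < q ->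
     INR (m j) = (Rpower k (INR j / INR q) * INR d / k)%R /\ 0 < m j) ->
  comb_diam_le r par (new_bags r par q m B) (2 * q + 1).
Proof.
move=> _ tree [_ _ B_connected] _ _ _ s t.
have [Ls [Lt [-> path_s path_t same_last]]] :=
  tpath_split tree s t (record_anc_par q m tree).
apply: (comb_length_two_chains (layer1_le r par q m) _ _ _ path_s path_t same_last).
- by move=> a b c; apply: record_anc_trans.
- by move=> a b c; apply: record_anc_redundant.
- by move=> a c; apply: record_anc_layer0.
Qed.
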